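(* Fix $n\ge 1$, $\theta\in(1/2,7/8]$, an integer $k\ge 1$, an interval $[\underline h,\bar h]\subset(0,1)$, $h_1\in[0,1]$ and $\alpha\in[0,1]$. Fix any realization of the couplings $(J_X)_{X\subset\{1,\dots,n\}}$ (with $J_X\ge 0$) and of the integer vector $\boldsymbol\tau=(\tau_1,\dots,\tau_n)$. Assume that for every $h_0\in[\underline h,\bar h]$ the Gibbs measure $\langle\cdot\rangle_{h_0,h_1,\alpha}$ satisfies $\langle\sigma_i\sigma_j\rangle_{h_0,h_1,\alpha}-\langle\sigma_i\rangle_{h_0,h_1,\alpha}\langle\sigma_j\rangle_{h_0,h_1,\alpha}\ge 0$ for all $i,j\in\{1,\dots,n\}$. Then $$\int_{\underline h}^{\bar h}dh_0\,\big\langle\big(Q_k-\langle Q_k\rangle_{h_0,h_1,\alpha}\big)^2\big\rangle_{h_0,h_1,\alpha}\le\frac{2k}{n}.$$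
   Context: Spins $\boldsymbol\sigma=(\sigma_1,\dots,\sigma_n)\in\{-1,1\}^n$; for $X\subset\{1,\dots,n\}$ write $\sigma_X=\prod_{i\in X}\sigma_i$. The couplings $J_X\ge 0$ are indexed by all subsets $X\subset\{1,\dots,n\}$; $\tau_i$ are nonnegative integers (in the random model they are i.i.d. Poisson with mean $\alpha n^{\theta-1}$, independent of the couplings). The Hamiltonian is $\mathcal H(\boldsymbol\sigma)=-\sum_{X\subset\{1,\dots,n\}}J_X\sigma_X-h_0\sum_{i=1}^n\sigma_i-h_1\sum_{i=1}^n\tau_i\sigma_i$, with partition function $\mathcal Z=\sum_{\boldsymbol\sigma}e^{-\mathcal H(\boldsymbol\sigma)}$ and Gibbs expectation $\langle f\rangle_{h_0,h_1,\alpha}=\mathcal Z^{-1}\sum_{\boldsymbol\sigma}f(\boldsymbol\sigma)e^{-\mathcal H(\boldsymbol\sigma)}$. For functions of $k$ replicas $\boldsymbol\sigma^{(1)},\dots,\boldsymbol\sigma^{(k)}$, $\langle\cdot\rangle$ denotes expectation under the $k$-fold product of the Gibbs measure (independent replicas). The overlap is $Q_k=\frac1n\sum_{i=1}^n\sigma_i^{(1)}\cdots\sigma_i^{(k)}$. *)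

From HB Require Import structures.
From mathcomp Require Import all_boot all_order all_algebra.
From mathcomp Require Import all_classical all_reals all_analysis.
Set Implicit Arguments. Unset Strict Implicit. Unset Printing Implicit Defensive.
Import Order.TTheory GRing.Theory Num.Theory.
Local Open Scope ring_scope.

Section Defs.
Variables (R : realType) (n : nat).

Definition config := {ffun 'I_n -> bool}.
Definition spin (b : bool) : R := if b then 1 else -1.

Definition sigmaX (X : {set 'I_n}) (s : config) : R := \prod_(i in X) spin (s i).

Definition hamiltonian (J : {set 'I_n} -> R) (tau : 'I_n -> nat) (h0 h1 : R)
  (s : config) : R :=
  - (\sum_(X : {set 'I_n}) J X * sigmaX X s)
  - h0 * (\sum_(i < n) spin (s i))
  - h1 * (\sum_(i < n) (tau i)%:R * spin (s i)).

Definition boltz J tau h0 h1 (s : config) : R := expR (- hamiltonian J tau h0 h1 s).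

Definition partition J tau h0 h1 : R := \sum_(s : config) boltz J tau h0 h1 s.

Definition gibbs J tau h0 h1 (f : config -> R) : R :=
  (\sum_(s : config) f s * boltz J tau h0 h1 s) / partition J tau h0 h1.

Definition gibbsk (k : nat) J tau h0 h1 (f : {ffun 'I_k -> config} -> R) : R :=
  (\sum_(S : {ffun 'I_k -> config})
      f S * \prod_(a < k) boltz J tau h0 h1 (S a))
  / (partition J tau h0 h1) ^+ k.

Definition overlap (k : nat) (S : {ffun 'I_k -> config}) : R :=
  n%:R^-1 * \sum_(i < n) \prod_(a < k) spin (S a i).

End Defs.

(* Write m_i = <s_i>, c_ij = <s_i s_j> and M = sum_i s_i.  Expanding the square
   over independent replicas, the variance of Q_k is
   n^-2 sum_ij (c_ij^k - (m_i m_j)^k).  All these numbers lie in [-1, 1] and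
   c_ij >= m_i m_j, so each term is at most k (c_ij - m_i m_j); hence the variance
   is at most k n^-2 (<M^2> - <M>^2), which is k n^-2 times the h0-derivative of
   <M>.  Integrating over [hlo, hhi] and using |<M>| <= n gives 2k/n. *)
From HB Require Import structures.
From mathcomp Require Import all_boot all_order all_algebra.
From mathcomp Require Import all_classical all_reals all_analysis.
From mathcomp Require Import ring lra.
Import Order.TTheory GRing.Theory Num.Theory.
Import numFieldNormedType.Exports.
Set Implicit Arguments. Unset Strict Implicit. Unset Printing Implicit Defensive.
Local Open Scope ring_scope.

Section WeightedAverage.
Variables (R : numFieldType) (T : finType) (w : T -> R) (k : nat).
Hypotheses (w_ge0 : forall t, 0 <= w t) (sum_w_gt0 : 0 < \sum_t w t).

Definition wavg (f : T -> R) : R := (\sum_t f t * w t) / \sum_t w t.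

Definition ravg (F : {ffun 'I_k -> T} -> R) : R :=
  (\sum_S F S * \prod_(a < k) w (S a)) / (\sum_t w t) ^+ k.

Lemma wavg_sum m (F : 'I_m -> T -> R) :
  wavg (fun t => \sum_(i < m) F i t) = \sum_(i < m) wavg (F i).
Proof.
rewrite /wavg -mulr_suml exchange_big /=; congr (_ / _).
by apply: eq_bigr => t _; rewrite mulr_suml.
Qed.

Lemma normr_wavg_le1 f : (forall t, `|f t| <= 1) -> `|wavg f| <= 1.
Proof.
move=> f_le1; rewrite /wavg normrM normfV (gtr0_norm sum_w_gt0).
rewrite ler_pdivrMr // mul1r; apply: le_trans (ler_norm_sum _ _ _) _.
by apply: ler_sum => t _; rewrite normrM (ger0_norm (w_ge0 t)) ler_piMl.
Qed.

Lemma ravg_prod (f : T -> R) : ravg (fun S => \prod_(a < k) f (S a)) = wavg f ^+ k.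
Proof.
rewrite /ravg /wavg expr_div_n; congr (_ / _).
rewrite -[in RHS](card_ord k) -prodr_const bigA_distr_bigA.
by apply: eq_bigr => S _; rewrite big_split.
Qed.

Lemma ravgD F G : ravg (fun S => F S + G S) = ravg F + ravg G.
Proof.
rewrite /ravg -mulrDl -big_split; congr (_ / _).
by apply: eq_bigr => S _; rewrite mulrDl.
Qed.

Lemma ravgZ c F : ravg (fun S => c * F S) = c * ravg F.
Proof.
rewrite /ravg mulrA mulr_sumr; congr (_ / _).
by apply: eq_bigr => S _; rewrite mulrA.
Qed.

Lemma ravg_sum m (F : 'I_m -> {ffun 'I_k -> T} -> R) :
  ravg (fun S => \sum_(i < m) F i S) = \sum_(i < m) ravg (F i).
Proof.
rewrite /ravg -mulr_suml exchange_big /=; congr (_ / _).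
by apply: eq_bigr => S _; rewrite mulr_suml.
Qed.

Lemma ravg_cst c : ravg (fun _ => c) = c.
Proof.
have ravg1 : ravg (fun _ => 1) = 1.
  have := ravg_prod (fun _ => 1); under eq_fun do rewrite big1_eq.
  move=> ->; rewrite /wavg; under eq_bigr do rewrite mul1r.
  by rewrite divff ?expr1n // gt_eqF.
rewrite -[RHS]mulr1 -ravg1 -ravgZ.
by under [in RHS]eq_fun do rewrite mulr1.
Qed.

Lemma ravg_ge0 F : (forall S, 0 <= F S) -> 0 <= ravg F.
Proof.
move=> F_ge0; apply: divr_ge0; last by rewrite exprn_ge0 // ltW.
by apply: sumr_ge0 => S _; rewrite mulr_ge0 ?prodr_ge0.
Qed.

End WeightedAverage.

Lemma subrXX_le_mul (R : realDomainType) (k : nat) (a b : R) :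
  `|a| <= 1 -> `|b| <= 1 -> b <= a -> a ^+ k - b ^+ k <= k%:R * (a - b).
Proof.
move=> a_le1 b_le1 b_le_a; rewrite subrXX mulrC ler_wpM2r ?subr_ge0 //.
apply: le_trans (ler_norm _) _; apply: le_trans (ler_norm_sum _ _ _) _.
rewrite -[k in k%:R]card_ord -sumr_const; apply: ler_sum => i _.
by rewrite normrM !normrX mulr_ile1 ?exprn_ge0 ?exprn_ile1.
Qed.

Lemma normr_spin (R : realType) (b : bool) : `|spin R b| = 1.
Proof. by case: b; rewrite /spin ?normrN normr1. Qed.

Definition magn (R : realType) n (s : config n) : R := \sum_(i < n) spin R (s i).

Section Overlap.
Variables (R : realType) (n k : nat) (w : config n -> R).
Hypotheses (w_ge0 : forall s, 0 <= w s) (sum_w_gt0 : 0 < \sum_s w s).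

Definition spin_mean (i : 'I_n) : R := wavg w (fun s => spin R (s i)).

Definition spin_corr (i j : 'I_n) : R :=
  wavg w (fun s => spin R (s i) * spin R (s j)).

Definition overlap_variance : R :=
  ravg w (fun S : {ffun 'I_k -> config n} => (overlap R S - ravg w (@overlap R n k)) ^+ 2).

Lemma normr_spin_mean_le1 i : `|spin_mean i| <= 1.
Proof. by apply: normr_wavg_le1 => // s; rewrite normr_spin. Qed.

Lemma normr_spin_corr_le1 i j : `|spin_corr i j| <= 1.
Proof. by apply: normr_wavg_le1 => // s; rewrite normrM !normr_spin mulr1. Qed.

Lemma ravg_overlap : ravg w (@overlap R n k) = n%:R^-1 * \sum_i spin_mean i ^+ k.
Proof.
rewrite /overlap ravgZ ravg_sum; congr (_ * _); apply: eq_bigr => i _.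
exact: (ravg_prod w k (fun s => spin R (s i))).
Qed.

Lemma overlap_sqr (S : {ffun 'I_k -> config n}) : overlap R S ^+ 2 =
  n%:R^-1 ^+ 2 * \sum_i \sum_j \prod_(a < k) (spin R (S a i) * spin R (S a j)).
Proof.
rewrite /overlap exprMn; congr (_ * _); rewrite expr2 mulr_suml.
by apply: eq_bigr => i _; rewrite mulr_sumr; apply: eq_bigr => j _; rewrite big_split.
Qed.

Lemma overlap_varianceE : overlap_variance =
  n%:R^-1 ^+ 2 * \sum_i \sum_j (spin_corr i j ^+ k - (spin_mean i * spin_mean j) ^+ k).
Proof.
rewrite /overlap_variance; set c := ravg w (@overlap R n k).
have mean_sqr : c ^+ 2 = n%:R^-1 ^+ 2 * \sum_i \sum_j (spin_mean i * spin_mean j) ^+ k.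
  rewrite /c ravg_overlap exprMn; congr (_ * _); rewrite expr2 mulr_suml.
  by apply: eq_bigr => i _; rewrite mulr_sumr; apply: eq_bigr => j _; rewrite [RHS]exprMn.
have -> : (fun S : {ffun 'I_k -> config n} => (overlap R S - c) ^+ 2) =
    (fun S => overlap R S ^+ 2 + (- (2 * c) * overlap R S + c ^+ 2)).
  by apply/funext => S; ring.
under eq_fun do rewrite overlap_sqr.
rewrite ravgD ravgD ravgZ ravgZ ravg_cst // ravg_sum.
under eq_bigr do rewrite ravg_sum.
under eq_bigr do under eq_bigr do rewrite (ravg_prod w k (fun s => spin R (s _) * spin R (s _))).
rewrite -/c (_ : - (2 * c) * c + c ^+ 2 = - c ^+ 2); last by ring.
rewrite mean_sqr -mulrN -mulrDr -sumrN -big_split /=; congr (_ * _).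
by apply: eq_bigr => i _; rewrite -sumrN -big_split.
Qed.

Lemma overlap_variance_ge0 : 0 <= overlap_variance.
Proof. by apply: ravg_ge0 => // S; exact: sqr_ge0. Qed.

Lemma wavg_magn : wavg w (@magn R n) = \sum_i spin_mean i.
Proof. exact: wavg_sum. Qed.

Lemma normr_wavg_magn_le : `|wavg w (@magn R n)| <= n%:R.
Proof.
rewrite wavg_magn; apply: le_trans (ler_norm_sum _ _ _) _.
rewrite -[n in n%:R]card_ord -sumr_const; apply: ler_sum => i _.
exact: normr_spin_mean_le1.
Qed.

Lemma wavg_magn_sqr :
  wavg w (fun s => magn R s * magn R s) = \sum_i \sum_j spin_corr i j.
Proof.
have -> : (fun s : config n => magn R s * magn R s) =
    (fun s => \sum_i \sum_j spin R (s i) * spin R (s j)).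
  apply/funext => s; rewrite /magn mulr_suml.
  by apply: eq_bigr => i _; rewrite mulr_sumr.
by rewrite wavg_sum; under eq_bigr do rewrite wavg_sum.
Qed.

Lemma overlap_variance_le :
  (forall i j, spin_mean i * spin_mean j <= spin_corr i j) ->
  overlap_variance <= k%:R * n%:R^-1 ^+ 2 *
    (wavg w (fun s => magn R s * magn R s) - wavg w (@magn R n) * wavg w (@magn R n)).
Proof.
move=> mean_le_corr; rewrite overlap_varianceE wavg_magn_sqr wavg_magn.
have -> : \sum_i \sum_j spin_corr i j - (\sum_i spin_mean i) * (\sum_i spin_mean i) =
    \sum_i \sum_j (spin_corr i j - spin_mean i * spin_mean j).
  by rewrite mulr_suml -sumrB; apply: eq_bigr => i _; rewrite mulr_sumr -sumrB.
rewrite (mulrC k%:R) -[in X in _ <= X]mulrA ler_wpM2l ?exprn_ge0 ?invr_ge0 // mulr_sumr.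
apply: ler_sum => i _; rewrite mulr_sumr; apply: ler_sum => j _.
apply: subrXX_le_mul; last exact: mean_le_corr.
- exact: normr_spin_corr_le1.
- by rewrite normrM mulr_ile1 ?normr_spin_mean_le1.
Qed.

End Overlap.

Lemma is_derive_big_sum (R : numFieldType) (V W : normedModType R) (I : finType)
    (f : I -> V -> W) (df : I -> W) (x v : V) :
  (forall i, is_derive x v (f i) (df i)) ->
  is_derive x v (fun y => \sum_i f i y) (\sum_i df i).
Proof.
move=> fdf; rewrite -fct_sumE.
by elim/big_ind2 : _ => // [|f1 d1 f2 d2]; [exact: is_derive_cst | exact: is_deriveD].
Qed.

Lemma is_derive_expR_affine (R : realType) (a m x : R) :
  is_derive x 1 (fun h => expR (a + h * m)) (m * expR (a + x * m)).
Proof.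
have daff : is_derive x 1 (fun h : R => a + h * m) m.
  have -> : (fun h : R => a + h * m) = cst a + id * cst m by [].
  by apply: is_derive_eq; rewrite /GRing.scale /= mulr0 mulr1 !add0r.
by apply: is_derive_eq (is_derive1_comp (is_derive_expR _) daff) _; rewrite mulrC.
Qed.

Section TiltedWeights.
Variables (R : realType) (T : finType) (A M : T -> R).

Definition tilt (h : R) (t : T) : R := expR (A t + h * M t).

Lemma tilt_ge0 h t : 0 <= tilt h t.
Proof. exact: expR_ge0. Qed.

Lemma sum_tilt_gt0 (t0 : T) h : 0 < \sum_t tilt h t.
Proof.
rewrite (bigD1 t0) //= ltr_pwDl ?expR_gt0 //.
by apply: sumr_ge0 => t _; exact: tilt_ge0.
Qed.

Lemma is_derive_sum_tilt (f : T -> R) (x : R) :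
  is_derive x 1 (fun h => \sum_t f t * tilt h t) (\sum_t f t * M t * tilt x t).
Proof.
apply: is_derive_big_sum => t; rewrite -mulrA.
exact: (is_deriveZ (f t) (is_derive_expR_affine (A t) (M t) x)).
Qed.

Lemma is_derive_wavg_tilt (t0 : T) (f : T -> R) (x : R) :
  is_derive x 1 (fun h => wavg (tilt h) f)
    (wavg (tilt x) (fun t => f t * M t) - wavg (tilt x) f * wavg (tilt x) M).
Proof.
have tilt1 h : \sum_t tilt h t = \sum_t 1 * tilt h t.
  by apply: eq_bigr => t _; rewrite mul1r.
have Z_neq0 : \sum_t 1 * tilt x t != 0 by rewrite -tilt1 lt0r_neq0 ?(sum_tilt_gt0 t0).
have dZ := is_deriveV Z_neq0 (is_derive_sum_tilt (fun=> 1) x).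
have -> : (fun h => wavg (tilt h) f) =
    (fun h => \sum_t f t * tilt h t) * (fun h => (\sum_t 1 * tilt h t)^-1).
  by apply/funext => h; rewrite /wavg tilt1.
apply: is_derive_eq (is_deriveM (is_derive_sum_tilt f x) dZ) _.
have sumM1 : \sum_t 1 * M t * tilt x t = \sum_t M t * tilt x t.
  by apply: eq_bigr => t _; rewrite mul1r.
rewrite /wavg -!tilt1 sumM1 /GRing.scale /=.
have := sum_tilt_gt0 t0 x; set Z := \sum_t tilt x t => Z_gt0.
by field; exact: lt0r_neq0.
Qed.

End TiltedWeights.

Lemma derivable1_continuous (R : numFieldType) (f : R -> R) (x : R) :
  derivable f x 1 -> {for x, continuous f}.
Proof. by move=> /derivable1_diffP; exact: differentiable_continuous. Qed.

Lemma integral_itv_le_antiderivative (R : realType) (V g G : R -> R) (a b : R) :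
  a <= b -> continuous V -> continuous g -> (forall x : R, is_derive x 1 G (g x)) ->
  (forall x, a <= x <= b -> 0 <= V x <= g x) ->
  (\int[lebesgue_measure]_(x in `[a, b]) (V x)%:E <= (G b - G a)%:E)%E.
Proof.
move=> a_le_b V_cont g_cont dG V_le_g.
have [a_eq_b | a_lt_b] := eqVneq a b.
  by rewrite a_eq_b (@integral_Sset1 _ _ _ b) ?set_itvE // subrr.
have {a_lt_b a_le_b} a_lt_b : a < b by rewrite lt_neqAle a_lt_b a_le_b.
have mV : measurable_fun `[a, b] V.
  exact: measurable_funS (measurable_realfun.continuous_measurable_fun V_cont).
have mg : measurable_fun `[a, b] g.
  exact: measurable_funS (measurable_realfun.continuous_measurable_fun g_cont).
apply: (@le_trans _ _ (\int[lebesgue_measure]_(x in `[a, b]) (g x)%:E)%E).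
  apply: ge0_le_integral => //.
  - by move=> x; rewrite /= in_itv /= lee_fin => /V_le_g /andP[].
  - exact/measurable_realfun.measurable_EFinP.
  - exact/measurable_realfun.measurable_EFinP.
  - by move=> x; rewrite /= in_itv /= lee_fin => /V_le_g /andP[].
have G_cont x : {for x, continuous G} by apply: derivable1_continuous; case: (dG x).
rewrite (@continuous_FTC2 _ g G _ _ a_lt_b) ?EFinB //.
- exact: continuous_subspaceT.
- split; first by move=> x _; case: (dG x).
  + exact: cvg_at_right_filter (G_cont a).
  + exact: cvg_at_left_filter (G_cont b).
- by move=> x _; rewrite derive1E; case: (dG x) => _ ->.
Qed.

Section TiltedSpins.
Variables (R : realType) (n k : nat) (A : config n -> R).

Let w h := tilt A (@magn R n) h.

Lemma sum_tilt_config_gt0 h : 0 < \sum_s w h s.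
Proof. exact: (sum_tilt_gt0 _ _ [ffun=> true]). Qed.

Lemma derivable_wavg_tilt f x : derivable (fun h => wavg (w h) f) x 1.
Proof. by case: (is_derive_wavg_tilt A (@magn R n) [ffun=> true] f x). Qed.

Lemma continuous_overlap_variance : continuous (fun h => overlap_variance k (w h)).
Proof.
move=> x; apply: derivable1_continuous.
have -> : (fun h => overlap_variance k (w h)) = (fun _ => n%:R^-1 ^+ 2) *
    \sum_i \sum_j ((fun h => spin_corr (w h) i j) ^+ k -
                   ((fun h => spin_mean (w h) i) * (fun h => spin_mean (w h) j)) ^+ k).
  apply/funext => h; rewrite overlap_varianceE ?sum_tilt_config_gt0 //.
  rewrite /= fct_sumE; congr (_ * _); apply: eq_bigr => i _.
  by rewrite fct_sumE; apply: eq_bigr => j _; rewrite /= !exprfctE.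
apply: derivableM; first exact: derivable_cst.
apply: derivable_sum => i; apply: derivable_sum => j.
by apply: derivableB; apply: derivableX; rewrite ?mulrfctE; [|apply: derivableM];
  exact: derivable_wavg_tilt.
Qed.

Lemma integral_overlap_variance_le (a b : R) : (0 < n)%N -> a <= b ->
  (forall h, a <= h <= b -> forall i j,
     spin_mean (w h) i * spin_mean (w h) j <= spin_corr (w h) i j) ->
  (\int[lebesgue_measure]_(h in `[a, b]) (overlap_variance k (w h))%:E
     <= ((2 * k%:R) / n%:R)%:E)%E.
Proof.
move=> n_gt0 a_le_b mean_le_corr.
pose c : R := k%:R * n%:R^-1 ^+ 2.
pose F h := wavg (w h) (@magn R n).
pose varF h := wavg (w h) (fun s => magn R s * magn R s) - F h * F h.
have dF (x : R) : is_derive x 1 F (varF x).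
  exact: is_derive_wavg_tilt A (@magn R n) [ffun=> true] (@magn R n) x.
apply: le_trans (@integral_itv_le_antiderivative _ _ (c \*: varF) (c \*: F) _ _
  a_le_b (continuous_overlap_variance) _ (fun x => is_deriveZ c (dF x)) _) _.
- move=> x; apply: derivable1_continuous; apply: derivableZ.
  by apply: derivableB; [|apply: derivableM]; exact: derivable_wavg_tilt.
- move=> h /mean_le_corr cov.
  rewrite (overlap_variance_ge0 _ (tilt_ge0 _ _ h) (sum_tilt_config_gt0 h)) /=.
  exact: overlap_variance_le (tilt_ge0 _ _ h) (sum_tilt_config_gt0 h) cov.
rewrite lee_fin /= -mulrBr.
have F_le h : `|F h| <= n%:R.
  exact: normr_wavg_magn_le (tilt_ge0 _ _ h) (sum_tilt_config_gt0 h).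
have F_incr_le : F b - F a <= 2 * n%:R.
  by move: (F_le a) (F_le b); rewrite !ler_norml => /andP[? ?] /andP[? ?]; lra.
have c_ge0 : 0 <= c by rewrite mulr_ge0 ?exprn_ge0 ?invr_ge0.
have -> : 2 * k%:R / n%:R = c * (2 * n%:R) by rewrite /c; field; rewrite pnatr_eq0 -lt0n.
by rewrite ler_wpM2l.
Qed.

End TiltedSpins.

Definition ising_field (R : realType) n (J : {set 'I_n} -> R) (tau : 'I_n -> nat)
    (h1 : R) (s : config n) : R :=
  \sum_X J X * sigmaX R X s + h1 * \sum_i (tau i)%:R * spin R (s i).

Lemma boltz_tilt (R : realType) n (J : {set 'I_n} -> R) tau (h0 h1 : R) :
  boltz J tau h0 h1 = tilt (ising_field J tau h1) (@magn R n) h0.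
Proof.
apply/funext => s; rewrite /boltz /hamiltonian /tilt /ising_field /magn.
by congr expR; ring.
Qed.

Theorem theorem2p1 (R : realType) (n : nat) (theta : R) (k : nat)
  (hlo hhi h1 alpha : R)
  (J : {set 'I_n} -> R) (tau : 'I_n -> nat) :
  (1 <= n)%N ->
  2^-1 < theta -> theta <= 7 / 8 ->
  (1 <= k)%N ->
  0 < hlo -> hlo <= hhi -> hhi < 1 ->
  0 <= h1 -> h1 <= 1 ->
  0 <= alpha -> alpha <= 1 ->
  (forall X, 0 <= J X) ->
  (forall h0 : R, hlo <= h0 <= hhi -> forall i j : 'I_n,
     gibbs J tau h0 h1 (fun s => spin R (s i) * spin R (s j))
     - gibbs J tau h0 h1 (fun s => spin R (s i))
       * gibbs J tau h0 h1 (fun s => spin R (s j)) >= 0) ->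
  (\int[lebesgue_measure]_(h0 in `[hlo, hhi]%classic)
     (@gibbsk R n k J tau h0 h1
        (fun S => (@overlap R n k S - @gibbsk R n k J tau h0 h1 (@overlap R n k)) ^+ 2))%:E
   <= ((2 * k%:R) / n%:R)%:E)%E.
Proof.
move=> n_gt0 _ _ _ _ hlo_le_hhi _ _ _ _ _ _ cov_ge0.
under eq_integral => h0 _.
  rewrite -[gibbsk _ _ _ _ _]/(overlap_variance k (boltz J tau h0 h1)) boltz_tilt.
  over.
apply: integral_overlap_variance_le => // h0 h0_in i j.
by rewrite /spin_mean /spin_corr -boltz_tilt -subr_ge0 cov_ge0.
Qed.
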